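(* Let $R$ be a t-unital ring. Then any c-projective left $R$-module is t-flat.
   Context: Rings are associative, not necessarily unital; modules are not assumed unital. $R$ is t-unital if $R\otimes_R R\to R$ is an isomorphism. A left $R$-module $M$ is t-unital if $R\otimes_R M\to M$ is an isomorphism, a right $R$-module $N$ is t-unital if $N\otimes_R R\to N$ is an isomorphism, and a left $R$-module $P$ is c-unital if $P\to\mathrm{Hom}_R(R,P)$, $p\mapsto(r\mapsto rp)$, is an isomorphism. For t-unital $R$, the category $R\text{-}{}^{c}\mathsf{Mod}$ of c-unital left $R$-modules and the category $\mathsf{Mod}^{t}\text{-}R$ of t-unital right $R$-modules are abelian (though their kernels/cokernels may differ from those in all modules). A left $R$-module $Q$ (not necessarily c-unital) is c-projective if the functor $\mathrm{Hom}_R(Q,{-})\colon R\text{-}{}^{c}\mathsf{Mod}\to\mathsf{Ab}$ takes cokernels in $R\text{-}{}^{c}\mathsf{Mod}$ to cokernels of abelian groups. A left $R$-module $F$ (not necessarily t-unital) is t-flat if the functor ${-}\otimes_R F\colon \mathsf{Mod}^{t}\text{-}R\to\mathsf{Ab}$ takes kernels in $\mathsf{Mod}^{t}\text{-}R$ to kernels of abelian groups. *)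

From mathcomp Require Import all_boot all_algebra.
Set Implicit Arguments. Unset Strict Implicit. Unset Printing Implicit Defensive.
Import GRing.Theory.
Local Open Scope ring_scope.

Record nuring := NURing {
  nur_car :> zmodType;
  nur_mul : nur_car -> nur_car -> nur_car;
  nur_mulA : forall x y z, nur_mul x (nur_mul y z) = nur_mul (nur_mul x y) z;
  nur_mulDl : forall x y z, nur_mul (x + y) z = nur_mul x z + nur_mul y z;
  nur_mulDr : forall x y z, nur_mul x (y + z) = nur_mul x y + nur_mul x z }.

Record lmodule (R : nuring) := LModule {
  lm_car :> zmodType;
  lm_act : R -> lm_car -> lm_car;
  lm_actA : forall r s m, lm_act (nur_mul r s) m = lm_act r (lm_act s m);
  lm_actDl : forall r s m, lm_act (r + s) m = lm_act r m + lm_act s m;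
  lm_actDr : forall r m n, lm_act r (m + n) = lm_act r m + lm_act r n }.

Record rmodule (R : nuring) := RModule {
  rm_car :> zmodType;
  rm_act : rm_car -> R -> rm_car;
  rm_actA : forall n r s, rm_act n (nur_mul r s) = rm_act (rm_act n r) s;
  rm_actDl : forall n m r, rm_act (n + m) r = rm_act n r + rm_act m r;
  rm_actDr : forall n r s, rm_act n (r + s) = rm_act n r + rm_act n s }.

Arguments lm_act {R} M r m : rename.
Arguments rm_act {R} N n r : rename.

Definition lreg (R : nuring) : lmodule R :=
  @LModule R R (@nur_mul R) (fun r s m => esym (nur_mulA r s m))
    (@nur_mulDl R) (@nur_mulDr R).
Definition rreg (R : nuring) : rmodule R :=
  @RModule R R (@nur_mul R) (@nur_mulA R) (@nur_mulDl R) (@nur_mulDr R).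

Definition lhom (R : nuring) (M N : lmodule R) (f : M -> N) : Prop :=
  (forall x y, f (x + y) = f x + f y) /\
  (forall r m, f (lm_act M r m) = lm_act N r (f m)).
Definition rhom (R : nuring) (M N : rmodule R) (f : M -> N) : Prop :=
  (forall x y, f (x + y) = f x + f y) /\
  (forall m r, f (rm_act M m r) = rm_act N (f m) r).

(** Every element of N (x)_R F is a finite sum of pure tensors n (x) x
    (signs are absorbed, -(n (x) x) = (-n) (x) x), so it is represented by a
    list of pairs.  Two such lists define the same element of N (x)_R F iff
    all R-balanced biadditive maps to abelian groups agree on them (the
    universal property of the tensor product). *)
Definition balanced (R : nuring) (N : rmodule R) (F : lmodule R)
    (A : zmodType) (b : N -> F -> A) : Prop :=
  [/\ (forall n n' x, b (n + n') x = b n x + b n' x),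
      (forall n x x', b n (x + x') = b n x + b n x') &
      (forall n r x, b (rm_act N n r) x = b n (lm_act F r x))].

Definition teq (R : nuring) (N : rmodule R) (F : lmodule R)
    (s t : seq (N * F)) : Prop :=
  forall (A : zmodType) (b : N -> F -> A), balanced b ->
    \sum_(p <- s) b p.1 p.2 = \sum_(p <- t) b p.1 p.2.

(** t-unitality: the multiplication maps R (x)_R R -> R, R (x)_R M -> M,
    N (x)_R R -> N are isomorphisms (surjective and injective). *)
Definition tunital_ring (R : nuring) : Prop :=
  (forall r : R, exists s : seq (R * R), r = \sum_(p <- s) nur_mul p.1 p.2) /\
  (forall s : seq (R * R), \sum_(p <- s) nur_mul p.1 p.2 = 0 ->
     @teq R (rreg R) (lreg R) s [::]).

Definition tunital_l (R : nuring) (M : lmodule R) : Prop :=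
  (forall m : M, exists s : seq (R * M), m = \sum_(p <- s) lm_act M p.1 p.2) /\
  (forall s : seq (R * M), \sum_(p <- s) lm_act M p.1 p.2 = 0 ->
     @teq R (rreg R) M s [::]).

Definition tunital_r (R : nuring) (N : rmodule R) : Prop :=
  (forall n : N, exists s : seq (N * R), n = \sum_(p <- s) rm_act N p.1 p.2) /\
  (forall s : seq (N * R), \sum_(p <- s) rm_act N p.1 p.2 = 0 ->
     @teq R N (lreg R) s [::]).

(** c-unitality: P -> Hom_R(R, P), p |-> (r |-> r p) is an isomorphism. *)
Definition cunital (R : nuring) (P : lmodule R) : Prop :=
  (forall p : P, (forall r : R, lm_act P r p = 0) -> p = 0) /\
  (forall g : lreg R -> P, lhom g ->
     exists p : P, forall r : R, g r = lm_act P r p).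

Definition is_ccokernel (R : nuring) (P1 P2 C : lmodule R)
    (f : P1 -> P2) (g : P2 -> C) : Prop :=
  (forall x, g (f x) = 0) /\
  (forall (D : lmodule R) (h : P2 -> D), cunital D -> lhom h ->
     (forall x, h (f x) = 0) ->
     exists u : C -> D, [/\ lhom u, (forall y, u (g y) = h y) &
        (forall u' : C -> D, lhom u' -> (forall y, u' (g y) = h y) ->
           forall c, u' c = u c)]).

Definition is_tkernel (R : nuring) (N1 N2 K : rmodule R)
    (f : N1 -> N2) (k : K -> N1) : Prop :=
  (forall x, f (k x) = 0) /\
  (forall (L : rmodule R) (h : L -> N1), tunital_r L -> rhom h ->
     (forall x, f (h x) = 0) ->
     exists u : L -> K, [/\ rhom u, (forall y, k (u y) = h y) &
        (forall u' : L -> K, rhom u' -> (forall y, k (u' y) = h y) ->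
           forall l, u' l = u l)]).

(** Q is c-projective: Hom_R(Q,-) : R-^cMod -> Ab takes cokernels in R-^cMod
    to cokernels of abelian groups, i.e. for every cokernel g of f in R-^cMod,
    Hom(Q,P1) -> Hom(Q,P2) -> Hom(Q,C) -> 0 is exact. *)
Definition cprojective (R : nuring) (Q : lmodule R) : Prop :=
  forall (P1 P2 C : lmodule R) (f : P1 -> P2) (g : P2 -> C),
    cunital P1 -> cunital P2 -> cunital C -> lhom f -> lhom g ->
    is_ccokernel f g ->
    [/\ (forall psi : Q -> C, lhom psi ->
           exists phi : Q -> P2, lhom phi /\ forall q, g (phi q) = psi q),
        (forall chi : Q -> P1, lhom chi -> forall q, g (f (chi q)) = 0) &
        (forall phi : Q -> P2, lhom phi -> (forall q, g (phi q) = 0) ->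
           exists chi : Q -> P1, lhom chi /\ forall q, f (chi q) = phi q)].

(** F is t-flat: - (x)_R F : Mod^t-R -> Ab takes kernels in Mod^t-R to kernels
    of abelian groups, i.e. for every kernel k of f in Mod^t-R,
    0 -> K (x) F -> N1 (x) F -> N2 (x) F is exact. *)
Definition tflat (R : nuring) (F : lmodule R) : Prop :=
  forall (N1 N2 K : rmodule R) (f : N1 -> N2) (k : K -> N1),
    tunital_r N1 -> tunital_r N2 -> tunital_r K -> rhom f -> rhom k ->
    is_tkernel f k ->
    [/\ (forall s : seq (K * F),
           teq [seq (k p.1, p.2) | p <- s] [::] -> teq s [::]),
        (forall s : seq (K * F), teq [seq (f (k p.1), p.2) | p <- s] [::]) &
        (forall t : seq (N1 * F), teq [seq (f p.1, p.2) | p <- t] [::] ->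
           exists s : seq (K * F), teq [seq (k p.1, p.2) | p <- s] t)].

(* Fix a divisible abelian group D having elements of every finite order, such
   as Q/Z.  Baer's argument (Zorn's lemma) makes D injective, and D separates
   every point from any subgroup not containing it.
   Dualising into D sends a t-unital right module N to the c-unital left module
   Hom_Z(N, D), and a kernel K -> N1 of N1 -> N2 in Mod^t-R to a cokernel
   Hom_Z(N2, D) -> Hom_Z(N1, D) -> Hom_Z(K, D) in R-^cMod: testing the kernel
   property against R itself controls the sequence after multiplication by
   elements of R, which is all that c-unital modules can see.  As Q is
   c-projective, Hom_R(Q, -) keeps this sequence exact, and by the adjunction
   Hom_R(Q, Hom_Z(N, D)) = Hom_Z(N (x)_R Q, D) this is the exactness of
   Hom_Z(- (x)_R Q, D) on K -> N1 -> N2.  Since D separates points from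
   subgroups, 0 -> K (x)_R Q -> N1 (x)_R Q -> N2 (x)_R Q is exact. *)

From HB Require Import structures.
From mathcomp Require Import all_boot all_algebra ring_quotient.
From mathcomp Require Import boolp classical_sets.
Set Implicit Arguments. Unset Strict Implicit. Unset Printing Implicit Defensive.
Import GRing.Theory Num.Theory.
Local Open Scope ring_scope.
Local Open Scope quotient_scope.

Definition additive_map (X Y : zmodType) (a : X -> Y) := {morph a : x y / x + y}.

Section AdditiveMaps.
Variables (X Y : zmodType) (a : X -> Y).
Hypothesis aD : additive_map a.

Lemma additive_map0 : a 0 = 0.
Proof. by apply: (@addrI _ (a 0)); rewrite -aD !addr0. Qed.

Lemma additive_mapN x : a (- x) = - a x.
Proof. by apply/eqP; rewrite -addr_eq0 addrC -aD subrr additive_map0. Qed.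

Lemma additive_mapB x y : a (x - y) = a x - a y.
Proof. by rewrite aD additive_mapN. Qed.

Lemma additive_map_sum I (s : seq I) (F : I -> X) :
  a (\sum_(i <- s) F i) = \sum_(i <- s) a (F i).
Proof.
elim: s => [|i s IH]; first by rewrite !big_nil additive_map0.
by rewrite !big_cons aD IH.
Qed.

End AdditiveMaps.

Lemma additive_map_comp (X Y Z : zmodType) (a : X -> Y) (c : Y -> Z) :
  additive_map a -> additive_map c -> additive_map (c \o a).
Proof. by move=> aA cA x y; rewrite /= aA cA. Qed.

Definition divisible (D : zmodType) :=
  forall (a : D) m, (0 < m)%N -> exists y, y *+ m = a.

Definition torsion_of_all_orders (D : zmodType) :=
  forall m, (1 < m)%N -> exists2 y : D, y *+ m = 0 & y != 0.

Local Notation rat_int := ((Num.int_num_subdef : {pred rat}) : zmodClosed rat).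
Definition QZ := Quotient.quot rat_int.

Lemma QZ_pi_eq0 (x : rat) : (\pi_QZ x == 0) = (x \is a Num.int).
Proof. by have := Quotient.idealrBE rat_int x 0; rewrite subr0 raddf0 => <-. Qed.

(* [raddfMn] speaks about the [zmodQuotType] instance of [QZ], whose
   projection is not syntactically [\pi_QZ]. *)
Lemma QZ_piMn (x : rat) m : \pi_QZ x *+ m = \pi_QZ (x *+ m).
Proof. exact: esym (raddfMn _ _ _). Qed.

Lemma QZ_divisible : divisible QZ.
Proof.
move=> a m m_gt0; exists (\pi_QZ (repr a / m%:R)).
by rewrite QZ_piMn -[(_ / _) *+ _]mulr_natr divfK ?reprK // pnatr_eq0 -lt0n.
Qed.

Lemma QZ_torsion : torsion_of_all_orders QZ.
Proof.
move=> m m_gt1; have m_gt0 : (0 : rat) < m%:R by rewrite ltr0n ltnW.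
exists (\pi_QZ m%:R^-1).
  by apply/eqP; rewrite QZ_piMn -[_^-1 *+ _]mulr_natr mulVf ?lt0r_neq0 // QZ_pi_eq0 rpred1.
rewrite QZ_pi_eq0; apply/negP => int_inv.
have := norm_intr_ge1 int_inv; rewrite invr_eq0 lt0r_neq0 // ger0_norm ?invr_ge0 ?ltW //.
by rewrite invf_ge1 // lern1 leqNgt m_gt1 => /(_ isT).
Qed.

Section PartialMaps.
Variable G : zmodType.

Definition subgroup (S : set G) :=
  [/\ S 0, (forall x y, S x -> S y -> S (x + y)) & (forall x, S x -> S (- x))].

Definition partial_additive (D : zmodType) (S : set G) (d : G -> D) :=
  forall x y, S x -> S y -> d (x + y) = d x + d y.

Definition partial_hom (D : zmodType) (p : set G * (G -> D)) :=
  subgroup p.1 /\ partial_additive p.1 p.2.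

Definition extends (D : zmodType) (p q : set G * (G -> D)) :=
  forall x, p.1 x -> q.1 x /\ q.2 x = p.2 x.

Lemma extends_refl (D : zmodType) (p : set G * (G -> D)) : extends p p.
Proof. by []. Qed.

Lemma extends_trans (D : zmodType) (p q r : set G * (G -> D)) :
  extends p q -> extends q r -> extends p r.
Proof. by move=> pq qr x /pq [/qr [rx ->] ->]. Qed.

Definition add_cyclic (S : set G) (g : G) : set G :=
  fun x => exists2 p : G * int, S p.1 & x = p.1 + g *~ p.2.

Variables (D : zmodType) (S : set G) (d : G -> D).
Hypotheses (sS : subgroup S) (dA : partial_additive S d).

Lemma subgroupMn x n : S x -> S (x *+ n).
Proof. by case: sS => S0 SD _ Sx; elim: n => [|n IH] //; rewrite mulrS; apply: SD. Qed.

Lemma partial_additive0 : d 0 = 0.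
Proof. by case: sS => S0 _ _; apply: (@addrI _ (d 0)); rewrite -dA ?addr0. Qed.

Lemma partial_additiveN x : S x -> d (- x) = - d x.
Proof.
case: sS => _ _ SN Sx; have SNx := SN x Sx.
by apply/eqP; rewrite -addr_eq0 addrC -dA // subrr partial_additive0.
Qed.

Lemma partial_additiveMn x n : S x -> d (x *+ n) = d x *+ n.
Proof.
move=> Sx; elim: n => [|n IH]; first by rewrite !mulr0n partial_additive0.
by rewrite !mulrS dA ?IH //; apply: subgroupMn.
Qed.

Lemma subgroup_mulrn_dvdn g :
  exists m, S (g *+ m) /\ forall n, S (g *+ n) -> (m %| n)%N.
Proof.
have [_ SD SN] := sS.
have [[n [n_gt0 Sn]]|no_pos] := pselect (exists n, (0 < n)%N /\ S (g *+ n)); last first.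
  exists 0%N; split=> [|[|n] // Sn]; first by rewrite mulr0n; case: sS.
  by case: no_pos; exists n.+1.
have : exists n, (0 < n)%N && `[< S (g *+ n) >] by exists n; rewrite n_gt0 asboolT.
case/ex_minnP=> m /andP[m_gt0 /asboolP Sm] m_min; exists m; split=> // k Sk.
have Smod : S (g *+ (k %% m)).
  have -> : g *+ (k %% m) = g *+ k - (g *+ m) *+ (k %/ m).
    by rewrite -mulrnA {2}(divn_eq k m) mulrnDr mulnC addrAC subrr add0r.
  by apply: SD => //; apply/SN/subgroupMn.
apply: contraT; rewrite -lt0n => mod_gt0.
have := m_min (k %% m)%N; rewrite mod_gt0 asboolT // leqNgt ltn_pmod //.
by move=> /(_ isT).
Qed.

Lemma subgroup_add_cyclic g : subgroup (add_cyclic S g).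
Proof.
have [S0 SD SN] := sS; split.
- by exists (0, 0%Z); rewrite //= mulr0z addr0.
- move=> _ _ [[s z] /= Ss ->] [[s' z'] /= Ss' ->].
  by exists (s + s', z + z'); [apply: SD | rewrite /= mulrzDr addrACA].
- move=> _ [[s z] /= Ss ->].
  by exists (- s, - z); [apply: SN | rewrite /= mulrNz opprD].
Qed.

Lemma extend_by_cyclic g (y : D) :
  (forall n, S (g *+ n) -> y *+ n = d (g *+ n)) ->
  exists p, [/\ partial_hom p, extends (S, d) p, p.1 g & p.2 g = y].
Proof.
move=> y_compat; have [S0 SD SN] := sS.
have y_compatz z : S (g *~ z) -> y *~ z = d (g *~ z).
  case: z => n; first by rewrite -!pmulrn; apply: y_compat.
  rewrite NegzE !mulrNz -!pmulrn => /SN; rewrite opprK => Sn.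
  by rewrite partial_additiveN // y_compat.
have well_def s s' z z' : S s -> S s' -> s + g *~ z = s' + g *~ z' ->
    d s + y *~ z = d s' + y *~ z'.
  move=> Ss Ss' e.
  have e' : g *~ (z - z') = s' - s.
    by rewrite mulrzBr; apply/eqP; rewrite subr_eq addrAC -e addrC addKr.
  have SNs := SN s Ss.
  have := y_compatz (z - z'); rewrite e' => /(_ (SD _ _ Ss' SNs)).
  rewrite dA // partial_additiveN // mulrzBr => h.
  by rewrite -[d s'](subrK (d s)) -h addrAC subrK addrC.
pose d' x := if pselect (add_cyclic S g x) is left h
  then let p := projT1 (cid2 h) in d p.1 + y *~ p.2 else 0.
have d'E s z : S s -> d' (s + g *~ z) = d s + y *~ z.
  move=> Ss; rewrite /d'; case: pselect => [h|[]]; last by exists (s, z).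
  by case: (cid2 h) => [[s1 z1] /= Ss1 e]; apply: well_def.
have S'E s z : S s -> add_cyclic S g (s + g *~ z) by exists (s, z).
exists (add_cyclic S g, d'); split=> /=.
- split=> [|_ _ [[s z] /= Ss ->] [[s' z'] /= Ss' ->]]; first exact: subgroup_add_cyclic.
  have Sss' := SD _ _ Ss Ss'.
  by rewrite addrACA -mulrzDr !d'E // dA // mulrzDr addrACA.
- move=> x Sx; have := S'E x 0 Sx; have := d'E x 0 Sx.
  by rewrite !mulr0z !addr0.
- by have := S'E 0 1 S0; rewrite add0r mulr1z.
- by have := d'E 0 1 S0; rewrite add0r !mulr1z partial_additive0 add0r.
Qed.

Hypothesis D_div : divisible D.

Lemma partial_hom_extends_to g :
  exists p, [/\ partial_hom p, extends (S, d) p & p.1 g].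
Proof.
have [m [Sm m_dvd]] := subgroup_mulrn_dvdn g.
have [y ym] : exists y, y *+ m = d (g *+ m).
  have [->|m_gt0] := posnP m; last exact: D_div.
  by exists 0; rewrite !mulr0n partial_additive0.
have y_compat n : S (g *+ n) -> y *+ n = d (g *+ n).
  move=> /m_dvd /dvdnP [q ->].
  by rewrite mulnC !mulrnA ym (partial_additiveMn q Sm).
by have [p [? ? ? _]] := extend_by_cyclic y_compat; exists p.
Qed.

End PartialMaps.

Section DivisibleInjective.
Variables (D : zmodType) (D_div : divisible D).

Lemma chain_upper_bound (G : zmodType) (A : set (set G * (G -> D))) p0 :
  A p0 -> (forall p, A p -> partial_hom p) ->
  (forall p q, A p -> A q -> extends p q \/ extends q p) ->
  exists2 u, partial_hom u & forall p, A p -> extends p u.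
Proof.
move=> Ap0 A_hom A_chain.
pose U x := exists2 p, A p & p.1 x.
pose u x := if pselect (U x) is left h then (projT1 (cid2 h)).2 x else 0.
have uE p x : A p -> p.1 x -> u x = p.2 x.
  move=> Ap px; rewrite /u; case: pselect => [h|[]]; last by exists p.
  case: (cid2 h) => q Aq qx /=.
  by case: (A_chain p q Ap Aq) => [/(_ x px)|/(_ x qx)] [].
have join p q : A p -> A q -> exists r, [/\ A r, extends p r & extends q r].
  by move=> Ap Aq; case: (A_chain p q Ap Aq) => ?; [exists q | exists p].
exists (U, u) => [|p Ap x px]; last by split; [exists p | exact: uE].
split; first split.
- by exists p0 => //; have [[]] := A_hom p0 Ap0.
- move=> x y [p Ap px] [q Aq qy].
  have [r [Ar /(_ x px) [rx _] /(_ y qy) [ry _]]] := join p q Ap Aq.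
  by exists r => //; have [[_ rD _] _] := A_hom r Ar; apply: rD.
- move=> x [p Ap px]; exists p => //.
  by have [[_ _ pN] _] := A_hom p Ap; apply: pN.
- move=> x y [p Ap px] [q Aq qy] /=.
  have [r [Ar /(_ x px) [rx _] /(_ y qy) [ry _]]] := join p q Ap Aq.
  have [[_ rD _] rA] := A_hom r Ar.
  by rewrite !(uE r) ?rA //; apply: rD.
Qed.

Lemma additive_extension (G : zmodType) (S : set G) (d : G -> D) :
  subgroup S -> partial_additive S d ->
  exists2 b : G -> D, additive_map b & forall x, S x -> b x = d x.
Proof.
move=> sS dA.
pose T := {p : set G * (G -> D) | partial_hom p /\ extends (S, d) p}.
pose le (p q : T) := `[< extends (sval p) (sval q) >].
pose t0 : T := exist _ (S, d) (conj (conj sS dA) (@extends_refl _ _ _)).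
have [t t_max] : exists t, premaximal le t.
  apply: (ZL_preorder t0).
  - by move=> p; apply/asboolP.
  - by move=> p q r /asboolP pq /asboolP qr; apply/asboolP; apply: extends_trans qr.
  move=> A A_chain.
  have [[p0 Ap0]|A0] := pselect (exists p, A p); last first.
    by exists t0 => p Ap; case: A0; exists p.
  have [|||u u_hom u_ub] := @chain_upper_bound G (sval @` A) (sval p0).
  - by exists p0.
  - by move=> _ [p _ <-]; case: (svalP p).
  - move=> _ _ [p Ap <-] [q Aq <-].
    by case: (A_chain p q Ap Aq) => /asboolP; [left | right].
  have Su : extends (S, d) u.
    by apply: extends_trans (u_ub _ (imageP _ Ap0)); case: (svalP p0).
  by exists (exist _ u (conj u_hom Su)) => p Ap; apply/asboolP/u_ub/imageP.
case: t t_max => [[S' d'] t_prop] t_max; have [[sS' dA'] Sd'] := t_prop.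
have S'T g : S' g.
  have [p [p_hom S'p pg]] := partial_hom_extends_to sS' dA' D_div g.
  have Sp : extends (S, d) p by apply: extends_trans S'p.
  have /asboolP := t_max (exist _ p (conj p_hom Sp)) (asboolT S'p).
  by move=> /(_ g pg) [].
exists d' => [x y|x Sx]; first exact: dA'.
by have [] := Sd' x Sx.
Qed.

Lemma additive_extend_along (X Y : zmodType) (h : X -> Y) (a : X -> D) :
  additive_map h -> additive_map a -> (forall x, h x = 0 -> a x = 0) ->
  exists2 b : Y -> D, additive_map b & forall x, b (h x) = a x.
Proof.
move=> hA aA ker_sub.
pose S y := exists x, y = h x.
pose d y := if pselect (S y) is left e then a (projT1 (cid e)) else 0.
have dE x : d (h x) = a x.
  rewrite /d; case: pselect => [e|[]]; last by exists x.
  case: (cid e) => x' /= e'; apply/eqP; rewrite -subr_eq0 -additive_mapB //.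
  by apply/eqP/ker_sub; rewrite additive_mapB // e' subrr.
have sS : subgroup S.
  split; first by exists 0; rewrite additive_map0.
  - by move=> _ _ [x ->] [y ->]; exists (x + y); rewrite hA.
  - by move=> _ [x ->]; exists (- x); rewrite additive_mapN.
have [|b bA bS] := @additive_extension Y S d sS.
  by move=> _ _ [x ->] [y ->]; rewrite -hA !dE aA.
by exists b => // x; rewrite bS ?dE //; exists x.
Qed.

Hypothesis D_tors : torsion_of_all_orders D.

Lemma additive_separates (G : zmodType) (I : set G) (t : G) :
  subgroup I -> ~ I t ->
  exists b : G -> D, [/\ additive_map b, (forall x, I x -> b x = 0) & b t <> 0].
Proof.
move=> sI It.
have [m [Im m_dvd]] := subgroup_mulrn_dvdn sI t.
(* [t] gets a value of additive order dividing that of [t] modulo [I]; when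
   that order is infinite ([m = 0]) any nonzero value does. *)
have [y ym y_neq0] : exists2 y : D, y *+ m = 0 & y != 0.
  case: m Im {m_dvd} => [|[|m]] Im; last exact: D_tors.
  - by have [y _ y_neq0] := D_tors (isT : (1 < 2)%N); exists y.
  - by case: It; rewrite -(mulr1n t).
have y_compat n : I (t *+ n) -> y *+ n = (fun _ => 0 : D) (t *+ n).
  by move=> /m_dvd /dvdnP [q ->]; rewrite mulnC mulrnA ym mul0rn.
have I0 : partial_additive I (fun _ => 0 : D) by move=> *; rewrite addr0.
have [[S' d'] [[sS' dA'] /= ext S't d't]] := extend_by_cyclic sI I0 y_compat.
have [b bA bS] := additive_extension sS' dA'.
exists b; split=> // [x Ix|]; first by have [S'x d'x] := ext x Ix; rewrite bS.
by rewrite bS //; move: d't => /= ->; apply/eqP.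
Qed.

End DivisibleInjective.

Section TensorProduct.
Variables (R : nuring) (N : rmodule R) (F : lmodule R).
Implicit Types (A : zmodType) (s t : seq (N * F)).

Lemma balanced_additive_l A (b : N -> F -> A) x :
  balanced b -> additive_map (b^~ x).
Proof. by case=> bD _ _ n n'; apply: bD. Qed.

Definition negl s := [seq (- p.1, p.2) | p <- s].

Lemma sum_negl A (b : N -> F -> A) s : balanced b ->
  \sum_(p <- negl s) b p.1 p.2 = - \sum_(p <- s) b p.1 p.2.
Proof.
move=> bb; rewrite big_map -sumrN; apply: eq_bigr => p _.
exact: (additive_mapN (balanced_additive_l p.2 bb)).
Qed.

Definition teqb s t := `[< @teq R N F s t >].

Lemma teqb_equiv : equiv_class_of teqb.
Proof.
split=> [s|s t|t s u]; rewrite /teqb.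
- by apply/asboolP.
- by apply/asboolP/asboolP => st A b bb; rewrite st.
- by move=> /asboolP st /asboolP tu; apply/asboolP => A b bb; rewrite st ?tu.
Qed.

Canonical teqb_equiv_rel := EquivRelPack teqb_equiv.
Canonical teqb_encModRel := defaultEncModRel teqb.

Definition tensor := {eq_quot teqb}.
HB.instance Definition _ : EqQuotient _ teqb tensor := EqQuotient.on tensor.
HB.instance Definition _ := Choice.on tensor.

Lemma tensor_eqP s t : \pi_tensor s = \pi_tensor t <-> teq s t.
Proof. by split=> [/eqquotP/asboolP | st]; last apply/eqquotP/asboolP. Qed.

Lemma teq_repr s : teq (repr (\pi_tensor s)) s.
Proof. exact/tensor_eqP/reprK. Qed.

Definition tensor_zero : tensor := lift_cst tensor [::].
Definition tensor_add := lift_op2 tensor cat.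
Definition tensor_opp := lift_op1 tensor negl.

Canonical pi_tensor_zero := PiConst tensor_zero.

Lemma pi_tensor_add : {morph \pi_tensor : s t / s ++ t >-> tensor_add s t}.
Proof.
move=> s t; unlock tensor_add; apply/tensor_eqP => A b bb.
by rewrite !big_cat /= (teq_repr s bb) (teq_repr t bb).
Qed.
Canonical pi_tensor_add_morph := PiMorph2 pi_tensor_add.

Lemma pi_tensor_opp : {morph \pi_tensor : s / negl s >-> tensor_opp s}.
Proof.
move=> s; unlock tensor_opp; apply/tensor_eqP => A b bb.
by rewrite !sum_negl // (teq_repr s bb).
Qed.
Canonical pi_tensor_opp_morph := PiMorph1 pi_tensor_opp.

Lemma tensor_addA : associative tensor_add.
Proof. by move=> x y z; rewrite -[x]reprK -[y]reprK -[z]reprK !piE catA. Qed.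

Lemma tensor_addC : commutative tensor_add.
Proof.
move=> x y; rewrite -[x]reprK -[y]reprK !piE; apply/tensor_eqP => A b bb.
by rewrite !big_cat /= addrC.
Qed.

Lemma tensor_add0 : left_id tensor_zero tensor_add.
Proof. by move=> x; rewrite -[x]reprK !piE. Qed.

Lemma tensor_addN : left_inverse tensor_zero tensor_opp tensor_add.
Proof.
move=> x; rewrite -[x]reprK !piE; apply/tensor_eqP => A b bb.
by rewrite big_cat /= sum_negl // addNr big_nil.
Qed.

HB.instance Definition _ :=
  GRing.isZmodule.Build tensor tensor_addA tensor_addC tensor_add0 tensor_addN.

Lemma pi_tensor_nil : \pi_tensor [::] = 0.
Proof. by rewrite piE. Qed.

Lemma pi_tensor_cat s t : \pi_tensor (s ++ t) = \pi_tensor s + \pi_tensor t.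
Proof. by rewrite piE. Qed.

Lemma pi_tensor_negl s : \pi_tensor (negl s) = - \pi_tensor s.
Proof. by rewrite piE. Qed.

Lemma additive_tensor_balanced A (chi : tensor -> A) :
  additive_map chi -> balanced (fun n x => chi (\pi_tensor [:: (n, x)])).
Proof.
move=> chiA; split=> [n n' x|n x x'|n r x]; last first.
  by congr chi; apply/tensor_eqP => B b [_ _ bM]; rewrite !big_cons !big_nil /= bM.
all: rewrite -chiA -pi_tensor_cat; congr chi; apply/tensor_eqP => B b [bD bD' _].
all: by rewrite !big_cons !big_nil /= !addr0 ?bD ?bD'.
Qed.

Lemma additive_tensor_sum A (chi : tensor -> A) s : additive_map chi ->
  chi (\pi_tensor s) = \sum_(p <- s) chi (\pi_tensor [:: p]).
Proof.
move=> chiA; elim: s => [|p s IH]; first by rewrite big_nil pi_tensor_nil additive_map0.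
by rewrite -cat1s pi_tensor_cat chiA IH big_cons.
Qed.

End TensorProduct.

Section ModuleFacts.
Variable R : nuring.

Lemma lm_act_additive (M : lmodule R) r : additive_map (lm_act M r).
Proof. exact: lm_actDr. Qed.

Lemma rm_act_additive (M : rmodule R) r : additive_map (rm_act M ^~ r).
Proof. by move=> x y; apply: rm_actDl. Qed.

Lemma tunital_ring_r : tunital_ring R -> tunital_r (rreg R).
Proof. by []. Qed.

Lemma rhom_zero (M1 M2 : rmodule R) : rhom (fun _ : M1 => 0 : M2).
Proof.
split=> [x y|m r]; first by rewrite addr0.
by rewrite (additive_map0 (rm_act_additive (M:=M2) r)).
Qed.

Lemma rhom_act_r (M : rmodule R) (m : M) : @rhom R (rreg R) M (rm_act M m).
Proof. by split=> [r s|r s]; [apply: rm_actDr | apply: rm_actA]. Qed.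

End ModuleFacts.

Definition dual (D : zmodType) (R : nuring) (N : rmodule R) :=
  {a : N -> D | additive_map a}.

HB.instance Definition _ D R N := gen_eqMixin (@dual D R N).
HB.instance Definition _ D R N := gen_choiceMixin (@dual D R N).

Section DualGroup.
Variables (D : zmodType) (R : nuring) (N : rmodule R).
Implicit Types a b : dual D N.

Lemma dual_ext a b : sval a =1 sval b -> a = b.
Proof. by case: a b => a aA [b bA] /= ab; apply: eq_exist; apply: funext. Qed.

Fact dual_zero_subproof : additive_map (fun _ : N => 0 : D).
Proof. by move=> x y; rewrite addr0. Qed.

Fact dual_add_subproof a b : additive_map (fun n => sval a n + sval b n).
Proof. by move=> x y; rewrite (svalP a) (svalP b) addrACA. Qed.

Fact dual_opp_subproof a : additive_map (fun n => - sval a n).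
Proof. by move=> x y; rewrite (svalP a) opprD. Qed.

Definition dual_zero : dual D N := exist _ _ dual_zero_subproof.
Definition dual_add a b : dual D N := exist _ _ (dual_add_subproof a b).
Definition dual_opp a : dual D N := exist _ _ (dual_opp_subproof a).

Lemma dual_addA : associative dual_add.
Proof. by move=> a b c; apply: dual_ext => n /=; rewrite addrA. Qed.

Lemma dual_addC : commutative dual_add.
Proof. by move=> a b; apply: dual_ext => n /=; rewrite addrC. Qed.

Lemma dual_add0 : left_id dual_zero dual_add.
Proof. by move=> a; apply: dual_ext => n /=; rewrite add0r. Qed.

Lemma dual_addN : left_inverse dual_zero dual_opp dual_add.
Proof. by move=> a; apply: dual_ext => n /=; rewrite addNr. Qed.

End DualGroup.

HB.instance Definition _ D R N :=
  GRing.isZmodule.Build (@dual D R N) (@dual_addA D R N) (@dual_addC D R N)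
    (@dual_add0 D R N) (@dual_addN D R N).

Section DualModule.
Variables (D : zmodType) (R : nuring).

Fact dual_act_subproof (N : rmodule R) r (a : dual D N) :
  additive_map (fun n => sval a (rm_act N n r)).
Proof. by move=> x y; rewrite rm_actDl (svalP a). Qed.

Definition dual_act (N : rmodule R) r (a : dual D N) : dual D N :=
  exist _ _ (dual_act_subproof r a).

Variable N : rmodule R.

Lemma dual_actA r s (a : dual D N) : dual_act (nur_mul r s) a = dual_act r (dual_act s a).
Proof. by apply: dual_ext => n /=; rewrite rm_actA. Qed.

Lemma dual_actDl r s (a : dual D N) : dual_act (r + s) a = dual_act r a + dual_act s a.
Proof. by apply: dual_ext => n /=; rewrite rm_actDr (svalP a). Qed.

Lemma dual_actDr r (a b : dual D N) : dual_act r (a + b) = dual_act r a + dual_act r b.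
Proof. by apply: dual_ext. Qed.

Definition dualmod : lmodule R := LModule dual_actA dual_actDl dual_actDr.

End DualModule.

Section DualMap.
Variables (D : zmodType) (R : nuring) (M N : rmodule R) (h : M -> N).
Hypothesis hA : additive_map h.

Fact dual_map_subproof (a : dual D N) : additive_map (sval a \o h).
Proof. by move=> x y; rewrite /= hA (svalP a). Qed.

Definition dual_map (a : dualmod D N) : dualmod D M := exist _ _ (dual_map_subproof a).

Lemma dual_map_lhom : (forall m r, h (rm_act M m r) = rm_act N (h m) r) -> lhom dual_map.
Proof.
move=> hM; split=> [a b|r a]; first exact: dual_ext.
by apply: dual_ext => m /=; rewrite hM.
Qed.

End DualMap.

Lemma tunital_r_factor (R : nuring) (N : rmodule R) (A : zmodType) (b : N -> R -> A) :
  tunital_r N -> @balanced R N (lreg R) A b ->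
  exists2 a : N -> A, additive_map a & forall n r, a (rm_act N n r) = b n r.
Proof.
move=> [N_gen N_rel] bb.
pose gen n := projT1 (cid (N_gen n)).
have genE n : n = \sum_(p <- gen n) rm_act N p.1 p.2 by rewrite /gen; case: cid.
pose a n := \sum_(p <- gen n) b p.1 p.2.
(* Independent of the presentation, as N (x)_R R -> N is injective. *)
have aE n s : n = \sum_(p <- s) rm_act N p.1 p.2 -> a n = \sum_(p <- s) b p.1 p.2.
  move=> ns; have : \sum_(p <- s ++ @negl _ _ (lreg R) (gen n)) rm_act N p.1 p.2 = 0.
    rewrite big_cat big_map /= -ns.
    under eq_bigr do rewrite (additive_mapN (rm_act_additive _)).
    by rewrite sumrN -genE subrr.
  move=> /N_rel /(_ A b bb); rewrite big_cat /= (sum_negl _ bb) big_nil => /eqP.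
  by rewrite subr_eq0 => /eqP.
exists a => [x y|n r]; last by rewrite (aE _ [:: (n, r)]) ?big_seq1.
by rewrite (aE _ (gen x ++ gen y)) ?big_cat // -!genE.
Qed.

Lemma dual_cunital (D : zmodType) (R : nuring) (N : rmodule R) :
  tunital_r N -> cunital (dualmod D N).
Proof.
move=> tN; split=> [a a_ann|g [gD gM]].
  apply: dual_ext => n /=; have [s ->] := proj1 tN n.
  rewrite (additive_map_sum (svalP a)) big1 // => p _.
  by move: (a_ann p.2) => /(congr1 (fun c : dual D N => sval c p.1)).
have bb : @balanced R N (lreg R) D (fun n r => sval (g r) n).
  by split=> [n n' r|n r s|n r s]; rewrite ?(svalP (g r)) ?gD ?gM.
have [a aA aE] := tunital_r_factor tN bb.
by exists (exist _ a aA) => r; apply: dual_ext => n /=; rewrite aE.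
Qed.

Lemma cunital_act_inj (R : nuring) (P : lmodule R) (p p' : P) : cunital P ->
  (forall r, lm_act P r p = lm_act P r p') -> p = p'.
Proof.
move=> [P_sep _] pp'; apply/eqP; rewrite -subr_eq0; apply/eqP/P_sep => r.
by rewrite (additive_mapB (lm_act_additive (M:=P) r)) pp' subrr.
Qed.

Lemma ccokernel_criterion (R : nuring) (P1 P2 C : lmodule R)
    (f : P1 -> P2) (g : P2 -> C) :
  lhom f -> lhom g -> (forall x, g (f x) = 0) ->
  (forall p, g p = 0 -> forall r, exists x, f x = lm_act P2 r p) ->
  (forall c r, exists p, g p = lm_act C r c) -> is_ccokernel f g.
Proof.
move=> [fD fM] [gD gM] gf ker_g im_g; split=> // E h E_cun [hD hM] hf.
have h_wd p p' : g p = g p' -> h p = h p'.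
  move=> gpp'; apply/eqP; rewrite -subr_eq0 -(additive_mapB hD); apply/eqP.
  have /ker_g gp0 : g (p - p') = 0 by rewrite (additive_mapB gD) gpp' subrr.
  apply: (proj1 E_cun) => r; have [x fx] := gp0 r.
  by rewrite -hM -fx hf.
pose pre c r := projT1 (cid (im_g c r)).
have preE c r : g (pre c r) = lm_act C r c by rewrite /pre; case: cid.
have hpreE c r p : g p = lm_act C r c -> h (pre c r) = h p.
  by move=> e; apply: h_wd; rewrite preE e.
have hpre_lhom c : @lhom R (lreg R) E (fun r => h (pre c r)).
  split=> [r s|r s].
    by rewrite (hpreE c _ (pre c r + pre c s)) ?hD // gD !preE lm_actDl.
  by rewrite (hpreE c _ (lm_act P2 r (pre c s))) ?hM // gM preE /= lm_actA.
pose u c := projT1 (cid (proj2 E_cun _ (hpre_lhom c))).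
have uE c r : h (pre c r) = lm_act E r (u c) by rewrite /u; case: cid.
exists u; split.
- split=> [c c'|r c]; apply: (cunital_act_inj E_cun) => s; rewrite -?lm_actA -!uE.
    rewrite lm_actDr -!uE -hD; apply: hpreE.
    by rewrite gD !preE lm_actDr.
  by apply: hpreE; rewrite preE lm_actA.
- move=> p; apply: (cunital_act_inj E_cun) => r; rewrite -uE -hM.
  by apply: hpreE; rewrite gM.
- move=> u' [u'D u'M] u'g c; apply: (cunital_act_inj E_cun) => r.
  by rewrite -uE -u'M -preE u'g.
Qed.

Section DualOfTKernel.
Variables (R : nuring) (N1 N2 K : rmodule R) (f : N1 -> N2) (k : K -> N1).
Hypotheses (tR : tunital_ring R) (hf : rhom f) (hk : rhom k) (ker : is_tkernel f k).

Lemma tkernel_act_eq0 x r : k x = 0 -> rm_act K x r = 0.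
Proof.
(* Both [s |-> x s] and [0] lift the zero map [R -> N1] through [k]. *)
move=> kx0; have [u [_ _ u_uniq]] := proj2 ker (rreg R) (fun _ => 0)
  (tunital_ring_r tR) (rhom_zero _ _) (fun _ => additive_map0 (proj1 hf)).
have kxr0 s : k (rm_act K x s) = 0.
  by rewrite (proj2 hk) kx0 (additive_map0 (rm_act_additive s)).
rewrite (u_uniq _ (rhom_act_r x) kxr0 r).
by rewrite -(u_uniq _ (rhom_zero _ _) (fun _ => additive_map0 (proj1 hk)) r).
Qed.

Lemma tkernel_act_image y r : f y = 0 -> exists x, k x = rm_act N1 y r.
Proof.
move=> fy0; have fyr0 s : f (rm_act N1 y s) = 0.
  by rewrite (proj2 hf) fy0 (additive_map0 (rm_act_additive s)).
have [u [_ ku _]] := proj2 ker (rreg R) _ (tunital_ring_r tR) (rhom_act_r y) fyr0.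
by exists (u r).
Qed.

Variables (D : zmodType) (D_div : divisible D).

Lemma dual_map_extend (M N : rmodule R) (h : M -> N) (hA : additive_map h)
    (c : dual D M) :
  (forall m, h m = 0 -> sval c m = 0) -> exists b, dual_map hA b = c.
Proof.
move=> c_ker; have [b bA bE] := additive_extend_along D_div hA (svalP c) c_ker.
by exists (exist _ b bA); apply: dual_ext => m /=.
Qed.

Lemma dual_tkernel_ccokernel :
  is_ccokernel (dual_map (D := D) (proj1 hf)) (dual_map (proj1 hk)).
Proof.
apply: ccokernel_criterion.
- exact: dual_map_lhom (proj2 hf).
- exact: dual_map_lhom (proj2 hk).
- move=> a; apply: dual_ext => x /=.
  by rewrite (proj1 ker) (additive_map0 (svalP a)).
- move=> b kb r; apply: dual_map_extend => n /(tkernel_act_image r) [x kx] /=.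
  by rewrite -kx; exact: (congr1 (fun c => sval c x) kb).
- move=> a r; apply: dual_map_extend => x /(tkernel_act_eq0 r) /= ->.
  exact: additive_map0 (svalP a).
Qed.

End DualOfTKernel.

Lemma lhom_dual_balanced (D : zmodType) (R : nuring) (N : rmodule R)
    (Q : lmodule R) (phi : Q -> dualmod D N) :
  lhom phi -> balanced (fun n q => sval (phi q) n).
Proof.
case=> phiD phiM; split=> [n n' q|n q q'|n r q]; first exact: (svalP (phi q)).
  by rewrite phiD.
by rewrite phiM.
Qed.

Section TensorExactness.
Variables (D : zmodType) (D_div : divisible D) (D_tors : torsion_of_all_orders D).
Variables (R : nuring) (Q : lmodule R) (N1 N2 K : rmodule R).
Variables (f : N1 -> N2) (k : K -> N1).
Hypotheses (fA : additive_map f) (kA : additive_map k).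

Lemma tensor_injective_of_dual_lift :
  (forall psi : Q -> dualmod D K, lhom psi ->
     exists phi : Q -> dualmod D N1, lhom phi /\ forall q, dual_map kA (phi q) = psi q) ->
  forall s : seq (K * Q), teq [seq (k p.1, p.2) | p <- s] [::] -> teq s [::].
Proof.
move=> lift s ks0 A b bb; rewrite big_nil; apply: contrapT => sum_neq0.
have zero_sub : subgroup (fun z : A => z = 0).
  by split=> [|x y -> ->|x ->]; rewrite ?addr0 ?oppr0.
have [chi [chiA _ chi_sum]] := additive_separates D_div D_tors zero_sub sum_neq0.
pose psi q : dualmod D K :=
  exist _ _ (additive_map_comp (balanced_additive_l q bb) chiA).
have psi_lhom : lhom psi.
  have [_ bD bM] := bb.
  by split=> [q q'|r q]; apply: dual_ext => x /=; rewrite ?bD ?chiA // -bM.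
have [phi [phi_lhom phiE]] := lift psi psi_lhom.
have := ks0 D _ (lhom_dual_balanced phi_lhom); rewrite big_map big_nil /= => h0.
apply: chi_sum; rewrite (additive_map_sum chiA) -[RHS]h0; apply: eq_bigr => p _.
by rewrite -[RHS]/(sval (dual_map kA (phi p.2)) p.1) phiE.
Qed.

Lemma tensor_exact_of_dual_exact :
  (forall phi : Q -> dualmod D N1, lhom phi -> (forall q, dual_map kA (phi q) = 0) ->
     exists chi : Q -> dualmod D N2, lhom chi /\ forall q, dual_map fA (chi q) = phi q) ->
  forall t : seq (N1 * Q), teq [seq (f p.1, p.2) | p <- t] [::] ->
    exists s : seq (K * Q), teq [seq (k p.1, p.2) | p <- s] t.
Proof.
move=> exact_dual t ft0; apply: contrapT => no_preimage.
pose I (z : tensor N1 Q) :=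
  exists s : seq (K * Q), z = \pi_(tensor N1 Q) [seq (k p.1, p.2) | p <- s].
have sI : subgroup I.
  split; first by exists [::]; rewrite pi_tensor_nil.
  - by move=> _ _ [s ->] [s' ->]; exists (s ++ s'); rewrite map_cat pi_tensor_cat.
  - move=> _ [s ->]; exists (negl s); rewrite -pi_tensor_negl /negl -!map_comp.
    by congr \pi_(tensor N1 Q); apply: eq_map => p /=; rewrite additive_mapN.
have It : ~ I (\pi_(tensor N1 Q) t).
  move=> [s /tensor_eqP st]; apply: no_preimage; exists s => A b bb.
  by rewrite st.
have [chi [chiA chiI chit]] := additive_separates D_div D_tors sI It.
have chi_bal := additive_tensor_balanced chiA.
pose phi q : dualmod D N1 := exist _ _ (balanced_additive_l q chi_bal).
have phi_lhom : lhom phi.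
  have [_ cD cM] := chi_bal.
  by split=> [q q'|r q]; apply: dual_ext => x /=; rewrite ?cD // -cM.
have phi_k q : dual_map kA (phi q) = 0.
  by apply: dual_ext => x /=; apply: chiI; exists [:: (x, q)].
have [psi [psi_lhom psiE]] := exact_dual phi phi_lhom phi_k.
have := ft0 D _ (lhom_dual_balanced psi_lhom); rewrite big_map big_nil /= => h0.
apply: chit; rewrite (additive_tensor_sum _ chiA) -[RHS]h0; apply: eq_bigr => -[n q] _.
by rewrite -[RHS]/(sval (dual_map fA (psi q)) n) psiE.
Qed.

End TensorExactness.

Theorem proposition8p21 (R : nuring) (Q : lmodule R) :
  tunital_ring R -> cprojective Q -> tflat Q.
Proof.
move=> tR cpQ N1 N2 K f k tN1 tN2 tK hf hk ker.
have [lift _ exact_dual] := cpQ _ _ _ _ _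
  (dual_cunital QZ tN2) (dual_cunital QZ tN1) (dual_cunital QZ tK)
  (dual_map_lhom QZ (proj1 hf) (proj2 hf)) (dual_map_lhom QZ (proj1 hk) (proj2 hk))
  (dual_tkernel_ccokernel tR hf hk ker QZ_divisible).
split.
- exact: (tensor_injective_of_dual_lift QZ_divisible QZ_torsion lift).
- move=> s A b bb; rewrite big_map big_nil big1 // => p _.
  by rewrite /= (proj1 ker) (additive_map0 (balanced_additive_l _ bb)).
- exact: (tensor_exact_of_dual_exact QZ_divisible QZ_torsion exact_dual).
Qed.
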